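(* Let $k\equiv5\pmod{10}$. Then $\operatorname{Ker}\nu_{G^k}=\{M\in\Gamma_{\theta,5}: M\equiv\pm\begin{pmatrix}1&0\\0&1\end{pmatrix}\pmod5\}$.
   Context: $\Gamma_{\theta,5}=\{M\in SL(2,\mathbb{Z}): M\equiv\pm\begin{pmatrix}1&0\\0&1\end{pmatrix}\text{ or }\pm\begin{pmatrix}0&-1\\1&0\end{pmatrix}\pmod 5\}$. For $M=\begin{pmatrix} a&b\\ c&d\end{pmatrix}\in\Gamma_{\theta,5}$ define $g(M)=\frac{6b}{5}+\frac{2ab}{5}+\frac{2cd}{5}$ if $M\equiv I$, $\frac{24b}{5}+\frac{2ab}{5}+\frac{2cd}{5}$ if $M\equiv -I$, $5+\frac{6d}{5}+\frac{2ab}{5}+\frac{2cd}{5}$ if $M\equiv\begin{pmatrix}0&-1\\1&0\end{pmatrix}$, $5-\frac{6d}{5}+\frac{2ab}{5}+\frac{2cd}{5}$ if $M\equiv\begin{pmatrix}0&1\\-1&0\end{pmatrix}$ (all mod 5). For $k\in\mathbb{Z}$, $\nu_{G^k}(M)=\exp\!\left(\frac{\pi i k}{5}g(M)\right)$; this is the multiplier system of $G^k$, where $G(\tau)=\eta^6(\tau)/\big(\theta\begin{bmatrix}3/5\\3/5\end{bmatrix}(0,\tau)\theta\begin{bmatrix}3/5\\7/5\end{bmatrix}(0,\tau)\big)$, i.e. $G^k(M\tau)=\nu_{G^k}(M)(c\tau+d)^{2k}G^k(\tau)$. $\operatorname{Ker}\nu_{G^k}=\{M\in\Gamma_{\theta,5}:\nu_{G^k}(M)=1\}$.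 *)

From Stdlib Require Import Reals ZArith.
From Coquelicot Require Import Coquelicot.

Open Scope Z_scope.

(* 2x2 integer matrices [[a, b], [c, d]] *)
Record Mat2Z := mkMat { ma : Z; mb : Z; mc : Z; md : Z }.

Definition inSL2Z (M : Mat2Z) : Prop := ma M * md M - mb M * mc M = 1.

Definition cong5 (x y : Z) : bool := Z.eqb ((x - y) mod 5) 0.

Definition congM5 (M : Mat2Z) (p q r s : Z) : bool :=
  cong5 (ma M) p && cong5 (mb M) q && cong5 (mc M) r && cong5 (md M) s.

Definition isI5 M := congM5 M 1 0 0 1.
Definition isNegI5 M := congM5 M (-1) 0 0 (-1).
Definition isS5 M := congM5 M 0 (-1) 1 0.
Definition isNegS5 M := congM5 M 0 1 (-1) 0.

Definition inGammaTheta5 (M : Mat2Z) : Prop :=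
  inSL2Z M /\ (isI5 M = true \/ isNegI5 M = true \/ isS5 M = true \/ isNegS5 M = true).

Open Scope R_scope.

(* g(M), defined by cases (the four cases are disjoint mod 5);
   the last branch is the case M = [[0,1],[-1,0]] mod 5 for M in Gamma_{theta,5}. *)
Definition gfun (M : Mat2Z) : R :=
  let a := IZR (ma M) in let b := IZR (mb M) in
  let c := IZR (mc M) in let d := IZR (md M) in
  let base := 2 * a * b / 5 + 2 * c * d / 5 in
  if isI5 M then 6 * b / 5 + base
  else if isNegI5 M then 24 * b / 5 + base
  else if isS5 M then 5 + 6 * d / 5 + base
  else 5 - 6 * d / 5 + base.

Definition cexpi (t : R) : C := (cos t, sin t).

Definition nuG (k : Z) (M : Mat2Z) : C := cexpi (PI * IZR k / 5 * gfun M).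

Definition KerNu (k : Z) (M : Mat2Z) : Prop := inGammaTheta5 M /\ nuG k M = RtoC 1.

(* Write k = 5 (2m + 1). Then nu_{G^k}(M) = exp(pi i (2m + 1) g(M)), and g(M) is
   always an integer: substituting the residues of a, b, c, d modulo 5 shows that
   g(M) is even when M = +-I (mod 5) and odd when M = +-[[0,-1],[1,0]] (mod 5). Hence
   nu_{G^k}(M) = 1 exactly in the first case. *)
From Stdlib Require Import Reals ZArith Lia Lra.
From Coquelicot Require Import Coquelicot.

Lemma cos_IZR_mul_PI (n : Z) : cos (IZR n * PI) = if Z.even n then 1 else -1.
Proof.
  assert (sin_j_PI : forall j, sin (IZR j * PI) = 0)
    by (intro j; apply sin_eq_0_1; exists j; reflexivity).
  destruct (Z.Even_or_Odd n) as [[j ->] | [j ->]].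
  - rewrite Z.even_mul; cbn [Z.even orb].
    replace (IZR (2 * j) * PI) with (2 * (IZR j * PI)) by (rewrite mult_IZR; ring).
    rewrite cos_2a_sin, sin_j_PI; ring.
  - rewrite Z.even_add, Z.even_mul; cbn [Z.even orb negb Bool.eqb].
    replace (IZR (2 * j + 1) * PI) with (2 * (IZR j * PI) + PI)
      by (rewrite plus_IZR, mult_IZR; ring).
    rewrite neg_cos, cos_2a_sin, sin_j_PI; ring.
Qed.

Lemma cexpi_IZR_mul_PI (n : Z) : cexpi (IZR n * PI) = RtoC 1 <-> Z.even n = true.
Proof.
  unfold cexpi. rewrite cos_IZR_mul_PI, sin_eq_0_1 by (exists n; reflexivity).
  destruct (Z.even n); split; intro H; try reflexivity; try discriminate.
  injection H; lra.
Qed.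

Lemma nuG_eq1_iff_even (k n : Z) (M : Mat2Z) :
  (k mod 10 = 5)%Z -> gfun M = IZR n -> nuG k M = RtoC 1 <-> Z.even n = true.
Proof.
  intros hk Hg.
  assert (Hm : exists m, k = (5 * (2 * m + 1))%Z).
  { exists (k / 10)%Z. pose proof (Z_div_mod_eq_full k 10). lia. }
  destruct Hm as [m Hm]. unfold nuG. rewrite Hg, Hm.
  replace (PI * IZR (5 * (2 * m + 1)) / 5 * IZR n) with (IZR ((2 * m + 1) * n) * PI)
    by (rewrite !mult_IZR, plus_IZR, mult_IZR; field).
  rewrite cexpi_IZR_mul_PI, Z.even_mul, Z.even_add, Z.even_mul; reflexivity.
Qed.

Lemma cong5_divide (x y : Z) : cong5 x y = true <-> (5 | x - y)%Z.
Proof. unfold cong5. rewrite Z.eqb_eq. apply Z.mod_divide. lia. Qed.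

Lemma cong5_lift (x y : Z) : cong5 x y = true -> exists q, x = (y + 5 * q)%Z.
Proof. rewrite cong5_divide. intros [q Hq]. exists q. lia. Qed.

Lemma cong5_of_common (x y z : Z) : cong5 x y = true -> cong5 x z = true -> cong5 y z = true.
Proof.
  rewrite !cong5_divide. intros Hy Hz.
  replace (y - z)%Z with ((x - z) - (x - y))%Z by ring.
  now apply Z.divide_sub_r.
Qed.

Lemma congM5_lift (M : Mat2Z) (p q r s : Z) : congM5 M p q r s = true ->
  exists a b c d, ma M = (p + 5 * a)%Z /\ mb M = (q + 5 * b)%Z /\
                  mc M = (r + 5 * c)%Z /\ md M = (s + 5 * d)%Z.
Proof.
  unfold congM5. intros H.
  apply andb_prop in H as [H Hd]; apply andb_prop in H as [H Hc];
    apply andb_prop in H as [Ha Hb].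
  apply cong5_lift in Ha as [a Ha]; apply cong5_lift in Hb as [b Hb];
    apply cong5_lift in Hc as [c Hc]; apply cong5_lift in Hd as [d Hd].
  now exists a, b, c, d.
Qed.

(* For concrete residue patterns the second hypothesis holds by computation. *)
Lemma congM5_exclusive {M : Mat2Z} {p q r s p' q' r' s' : Z} :
  congM5 M p q r s = true ->
  congM5 (mkMat p q r s) p' q' r' s' = false -> congM5 M p' q' r' s' = false.
Proof.
  unfold congM5; cbn [ma mb mc md]. intros H Hpat.
  apply Bool.not_true_iff_false. intros H'.
  apply andb_prop in H as [H Hd]; apply andb_prop in H as [H Hc];
    apply andb_prop in H as [Ha Hb].
  apply andb_prop in H' as [H' Hd']; apply andb_prop in H' as [H' Hc'];
    apply andb_prop in H' as [Ha' Hb'].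
  rewrite (cong5_of_common _ _ _ Ha Ha'), (cong5_of_common _ _ _ Hb Hb'),
    (cong5_of_common _ _ _ Hc Hc'), (cong5_of_common _ _ _ Hd Hd') in Hpat.
  discriminate.
Qed.

Ltac push_IZR_field := repeat rewrite ?plus_IZR, ?minus_IZR, ?mult_IZR, ?opp_IZR; field.

Lemma gfun_even_of_isI5 (M : Mat2Z) : isI5 M = true -> exists n, gfun M = IZR (2 * n).
Proof.
  intros H. pose proof (congM5_lift _ _ _ _ _ H) as (_ & b & c & _ & _ & Eb & Ec & _).
  exists (3 * b + ma M * b + c * md M)%Z.
  unfold gfun. rewrite H, Eb, Ec. push_IZR_field.
Qed.

Lemma gfun_even_of_isNegI5 (M : Mat2Z) : isNegI5 M = true -> exists n, gfun M = IZR (2 * n).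
Proof.
  intros H. pose proof (congM5_lift _ _ _ _ _ H) as (_ & b & c & _ & _ & Eb & Ec & _).
  assert (HI : isI5 M = false) by (apply (congM5_exclusive H); reflexivity).
  exists (12 * b + ma M * b + c * md M)%Z.
  unfold gfun. rewrite HI, H, Eb, Ec. push_IZR_field.
Qed.

Lemma gfun_odd_of_isS5 (M : Mat2Z) : isS5 M = true -> exists n, gfun M = IZR (2 * n + 1).
Proof.
  intros H. pose proof (congM5_lift _ _ _ _ _ H) as (a & _ & _ & d & Ea & _ & _ & Ed).
  assert (HI : isI5 M = false) by (apply (congM5_exclusive H); reflexivity).
  assert (HN : isNegI5 M = false) by (apply (congM5_exclusive H); reflexivity).
  exists (2 + 3 * d + a * mb M + mc M * d)%Z.
  unfold gfun. rewrite HI, HN, H, Ea, Ed. push_IZR_field.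
Qed.

Lemma gfun_odd_of_isNegS5 (M : Mat2Z) : isNegS5 M = true -> exists n, gfun M = IZR (2 * n + 1).
Proof.
  intros H. pose proof (congM5_lift _ _ _ _ _ H) as (a & _ & _ & d & Ea & _ & _ & Ed).
  assert (HI : isI5 M = false) by (apply (congM5_exclusive H); reflexivity).
  assert (HN : isNegI5 M = false) by (apply (congM5_exclusive H); reflexivity).
  assert (HS : isS5 M = false) by (apply (congM5_exclusive H); reflexivity).
  exists (2 - 3 * d + a * mb M + mc M * d)%Z.
  unfold gfun. rewrite HI, HN, HS, Ea, Ed. push_IZR_field.
Qed.

Lemma gfun_parity (M : Mat2Z) : inGammaTheta5 M ->
  exists n, gfun M = IZR n /\ Z.even n = (isI5 M || isNegI5 M)%bool.
Proof.
  intros [_ [H | [H | [H | H]]]].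
  - destruct (gfun_even_of_isI5 M H) as [n Hn].
    exists (2 * n)%Z. rewrite H, Z.even_mul. auto.
  - destruct (gfun_even_of_isNegI5 M H) as [n Hn].
    exists (2 * n)%Z. rewrite H, Bool.orb_true_r, Z.even_mul. auto.
  - destruct (gfun_odd_of_isS5 M H) as [n Hn].
    exists (2 * n + 1)%Z. split; [exact Hn |].
    unfold isI5, isNegI5. rewrite !(congM5_exclusive H) by reflexivity.
    rewrite Z.even_add, Z.even_mul. reflexivity.
  - destruct (gfun_odd_of_isNegS5 M H) as [n Hn].
    exists (2 * n + 1)%Z. split; [exact Hn |].
    unfold isI5, isNegI5. rewrite !(congM5_exclusive H) by reflexivity.
    rewrite Z.even_add, Z.even_mul. reflexivity.
Qed.

Theorem mainTheorem10 (k : Z) (hk : (k mod 10 = 5)%Z) :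
  forall M : Mat2Z,
    KerNu k M <-> (inGammaTheta5 M /\ (isI5 M = true \/ isNegI5 M = true)).
Proof.
  intros M. unfold KerNu.
  split; intros [HG H]; split; try exact HG;
    destruct (gfun_parity M HG) as (n & Hg & Hpar);
    rewrite (nuG_eq1_iff_even k n M hk Hg), Hpar, Bool.orb_true_iff in *; exact H.
Qed.
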